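(* (1) Let $f_1:G_1\to H_1$ and $f_2:G_2\to H_2$ be group homomorphisms and let $f_1\times f_2:G_1\times G_2\to H_1\times H_2$ be $(a_1,a_2)\mapsto (f_1(a_1),f_2(a_2))$. If $f_1$ does not admit a global section, then $\mathrm{sec}(f_1)\leq \mathrm{sec}(f_1\times f_2)$; likewise, if $f_2$ does not admit a global section, then $\mathrm{sec}(f_2)\leq \mathrm{sec}(f_1\times f_2)$. (2) Let $f:G\to H$ be a group homomorphism and $K$ a group. Then $\mathrm{sec}(f\times\mathrm{id}_K)\leq \mathrm{sec}(f)$, with equality whenever $f$ does not admit a global section.
   Context: For a homomorphism $f:G\to H$ and a subgroup $L\le H$, a local section of $f$ on $L$ is a homomorphism $s:L\to G$ with $f\circ s=\mathrm{incl}_L$ (the inclusion $L\hookrightarrow H$); a global section is a local section on $L=H$. The sectional number $\mathrm{sec}(f)$ is the least positive integer $m$ such that there exist proper subgroups $H_1,\ldots,H_m$ of $H$ with $H=H_1\cup\cdots\cup H_m$ and such that $f$ admits a local section on each $H_i$; $\mathrm{sec}(f)=\infty$ if no such $m$ exists. *)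

From Stdlib Require Import Arith Lia Classical ClassicalEpsilon.

Set Implicit Arguments.

(* A group: carrier, multiplication, unit, inverse; left unit and left
   inverse axioms (standard equivalent axiomatization of groups). *)
Record group := Group {
  gcar :> Type;
  gmul : gcar -> gcar -> gcar;
  gone : gcar;
  ginv : gcar -> gcar;
  gassoc : forall x y z, gmul x (gmul y z) = gmul (gmul x y) z;
  gmul1 : forall x, gmul gone x = x;
  gmulV : forall x, gmul (ginv x) x = gone }.

Arguments gmul {g}. Arguments gone {g}. Arguments ginv {g}.

Record hom (G H : group) := Hom {
  hfun :> G -> H;
  hmul : forall x y, hfun (gmul x y) = gmul (hfun x) (hfun y) }.

Definition subgroup (H : group) (L : H -> Prop) : Prop :=
  L gone /\ (forall x y, L x -> L y -> L (gmul x y)) /\ (forall x, L x -> L (ginv x)).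

Definition proper (H : group) (L : H -> Prop) : Prop := exists h, ~ L h.

(* A local section of f on L: a homomorphism s : L -> G with f o s = incl_L.
   It is represented by a function on H whose behaviour is only constrained on L. *)
Definition local_section (G H : group) (f : hom G H) (L : H -> Prop) : Prop :=
  exists s : H -> G,
    (forall x y, L x -> L y -> s (gmul x y) = gmul (s x) (s y)) /\
    (forall x, L x -> f (s x) = x).

Definition global_section (G H : group) (f : hom G H) : Prop :=
  local_section f (fun _ => True).

Definition sec_cover (G H : group) (f : hom G H) (m : nat) : Prop :=
  0 < m /\
  exists Hs : nat -> H -> Prop,
    (forall i, i < m -> @subgroup H (Hs i) /\ @proper H (Hs i) /\ local_section f (Hs i)) /\
    (forall h : H, exists i, i < m /\ Hs i h).

(* Extended naturals: None stands for infinity. *)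
Definition enat := option nat.
Definition ele (a b : enat) : Prop :=
  match a, b with
  | _, None => True
  | None, Some _ => False
  | Some x, Some y => x <= y
  end.

Lemma least_exists (P : nat -> Prop) :
  (exists m, P m) -> exists m, P m /\ forall k, P k -> m <= k.
Proof.
  intros [m Hm].
  induction m as [m IH] using (well_founded_induction lt_wf).
  destruct (classic (exists k, P k /\ k < m)) as [[k [Hk Hlt]]|Hn].
  - exact (IH k Hlt Hk).
  - exists m; split; [exact Hm|].
    intros k Hk. destruct (le_lt_dec m k) as [|Hlt]; [assumption|].
    exfalso; apply Hn; eauto.
Qed.

Definition sec (G H : group) (f : hom G H) : enat :=
  match excluded_middle_informative (exists m, sec_cover f m) with
  | left E => Some (proj1_sig (constructive_indefinite_description _ (@least_exists (sec_cover f) E)))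
  | right _ => None
  end.

Section Prod.
Variables G1 G2 : group.
Definition pmul (x y : G1 * G2) : G1 * G2 := (gmul (fst x) (fst y), gmul (snd x) (snd y)).
Lemma pmulA x y z : pmul x (pmul y z) = pmul (pmul x y) z.
Proof. destruct x, y, z; unfold pmul; simpl; now rewrite !gassoc. Qed.
Lemma pmul1 x : pmul (gone, gone) x = x.
Proof. destruct x; unfold pmul; simpl; now rewrite !gmul1. Qed.
Lemma pmulV x : pmul (ginv (fst x), ginv (snd x)) x = (gone, gone).
Proof. destruct x; unfold pmul; simpl; now rewrite !gmulV. Qed.
Definition prod_group : group :=
  @Group (G1 * G2)%type pmul (gone, gone) (fun x => (ginv (fst x), ginv (snd x)))
         pmulA pmul1 pmulV.
End Prod.

Section ProdHom.
Variables G1 H1 G2 H2 : group.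
Variables (f1 : hom G1 H1) (f2 : hom G2 H2).
Definition prod_fun (x : prod_group G1 G2) : prod_group H1 H2 := (f1 (fst x), f2 (snd x)).
Lemma prod_fun_mul x y : prod_fun (gmul x y) = gmul (prod_fun x) (prod_fun y).
Proof. destruct x, y; unfold prod_fun; simpl; unfold pmul; simpl; now rewrite !hmul. Qed.
Definition prod_hom : hom (prod_group G1 G2) (prod_group H1 H2) := @Hom (prod_group G1 G2) (prod_group H1 H2) prod_fun prod_fun_mul.
End ProdHom.

Definition id_hom (K : group) : hom K K := @Hom K K (fun x => x) (fun _ _ => eq_refl).

(* A cover of H1 × H2 by proper subgroups carrying local sections of f1 × f2
   restricts along h ↦ (h, 1) to a cover of H1 by subgroups carrying local
   sections of f1 (compose with the projection G1 × G2 → G1); a restricted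
   subgroup can only fail to be proper if f1 has a global section.
   Conversely, a cover of H pulls back along the projection H × K → H, and a
   local section s of f on L gives the local section (h, k) ↦ (s h, k) of
   f × id_K on L × K. *)
From Stdlib Require Import Lia Classical ClassicalEpsilon.

Set Implicit Arguments.

Section GroupFacts.
Context {G : group}.

Lemma gmul_cancel_l (a x y : G) : gmul a x = gmul a y -> x = y.
Proof.
  intros E.
  rewrite <- (gmul1 _ x), <- (gmul1 _ y), <- (gmulV _ a), <- !gassoc, E.
  reflexivity.
Qed.

Lemma gmulVr (x : G) : gmul x (ginv x) = gone.
Proof.
  set (y := ginv x).
  rewrite <- (gmul1 _ (gmul x y)), <- (gmulV _ y) at 1.
  rewrite <- gassoc, (gassoc _ y x y).
  unfold y at 2 3. rewrite gmulV, gmul1. apply gmulV.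
Qed.

Lemma gmul1r (x : G) : gmul x gone = x.
Proof. rewrite <- (gmulV _ x), gassoc, gmulVr, gmul1. reflexivity. Qed.

End GroupFacts.

Section HomFacts.
Variables (H H' : group) (j : hom H H').

Lemma hom_one : j gone = gone.
Proof.
  apply (gmul_cancel_l (j gone)).
  rewrite <- hmul, gmul1, gmul1r. reflexivity.
Qed.

Lemma hom_inv (x : H) : j (ginv x) = ginv (j x).
Proof.
  apply (gmul_cancel_l (j x)).
  rewrite <- hmul, !gmulVr. apply hom_one.
Qed.

Lemma subgroup_preim (L : H' -> Prop) :
  @subgroup H' L -> @subgroup H (fun x => L (j x)).
Proof.
  intros [L1 [LM LV]]. repeat split.
  - rewrite hom_one. exact L1.
  - intros x y Hx Hy. rewrite hmul. auto.
  - intros x Hx. rewrite hom_inv. auto.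
Qed.

End HomFacts.

Section ProductHoms.
Variables G1 G2 : group.

Definition pairg1 (x : G1) : prod_group G1 G2 := (x, gone).
Definition pair1g (x : G2) : prod_group G1 G2 := (gone, x).

Lemma pairg1_mul x y : pairg1 (gmul x y) = gmul (pairg1 x) (pairg1 y).
Proof. unfold pairg1; simpl; unfold pmul; simpl. now rewrite gmul1. Qed.

Lemma pair1g_mul x y : pair1g (gmul x y) = gmul (pair1g x) (pair1g y).
Proof. unfold pair1g; simpl; unfold pmul; simpl. now rewrite gmul1. Qed.

Definition pairg1_hom : hom G1 (prod_group G1 G2) :=
  @Hom G1 (prod_group G1 G2) pairg1 pairg1_mul.
Definition pair1g_hom : hom G2 (prod_group G1 G2) :=
  @Hom G2 (prod_group G1 G2) pair1g pair1g_mul.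

Definition fst_hom : hom (prod_group G1 G2) G1 :=
  @Hom (prod_group G1 G2) G1 fst (fun _ _ => eq_refl).
Definition snd_hom : hom (prod_group G1 G2) G2 :=
  @Hom (prod_group G1 G2) G2 snd (fun _ _ => eq_refl).

End ProductHoms.

Section LocalSections.
Variables (G H : group) (f : hom G H).

Lemma local_section_mono (L L' : H -> Prop) :
  (forall x, L x -> L' x) -> local_section f L' -> local_section f L.
Proof. intros LL' [s [sM sf]]. exists s. split; auto. Qed.

Lemma global_local_section (L : H -> Prop) :
  global_section f -> local_section f L.
Proof. apply local_section_mono. auto. Qed.

Lemma proper_of_local_section (L : H -> Prop) :
  ~ global_section f -> local_section f L -> @proper H L.
Proof.
  intros Hng HL. apply NNPP. intros Hnp. apply Hng.
  revert HL. apply local_section_mono.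
  intros x _. apply NNPP. intros Lx. apply Hnp. now exists x.
Qed.

End LocalSections.

Lemma id_global_section (K : group) : global_section (id_hom K).
Proof. exists (fun x => x). split; reflexivity. Qed.

Lemma local_section_prod (G1 H1 G2 H2 : group) (f1 : hom G1 H1) (f2 : hom G2 H2)
    (L1 : H1 -> Prop) (L2 : H2 -> Prop) :
  local_section f1 L1 -> local_section f2 L2 ->
  local_section (prod_hom f1 f2) (fun p => L1 (fst p) /\ L2 (snd p)).
Proof.
  intros [s1 [s1M s1f]] [s2 [s2M s2f]].
  exists (fun p : prod_group H1 H2 => (s1 (fst p), s2 (snd p)) : prod_group G1 G2).
  split.
  - intros [x1 x2] [y1 y2] [Hx1 Hx2] [Hy1 Hy2]. simpl in *. unfold pmul; simpl.
    now rewrite s1M, s2M.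
  - intros [x1 x2] [Hx1 Hx2]. simpl in *. unfold prod_fun; simpl.
    now rewrite s1f, s2f.
Qed.

(* [f] is a retract of [f'] through [j] on the targets and [q] on the sources;
   [r] need not be a homomorphism. *)
Section Retract.
Variables (G H G' H' : group) (f : hom G H) (f' : hom G' H').
Variables (j : hom H H') (q : hom G' G) (r : H' -> H).
Hypothesis r_j : forall x, r (j x) = x.
Hypothesis f_q : forall y, f (q y) = r (f' y).

Lemma local_section_retract (L : H' -> Prop) :
  local_section f' L -> local_section f (fun x => L (j x)).
Proof.
  intros [s [sM sf]]. exists (fun x => q (s (j x))). split.
  - intros x y Hx Hy. now rewrite hmul, sM, hmul.
  - intros x Hx. now rewrite f_q, sf, r_j.
Qed.

Lemma sec_cover_retract m :
  ~ global_section f -> sec_cover f' m -> sec_cover f m.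
Proof.
  intros Hng [m_pos [Ls [HLs cover]]]. split; [exact m_pos|].
  exists (fun i x => Ls i (j x)). split.
  - intros i Hi. destruct (HLs i Hi) as [sgL [_ secL]].
    pose proof (local_section_retract secL) as secL'.
    split; [|split]; [now apply subgroup_preim | | exact secL'].
    exact (proper_of_local_section Hng secL').
  - intros x. apply cover.
Qed.

End Retract.

Lemma sec_cover_prod_global (G H G' H' : group) (f : hom G H) (g : hom G' H') m :
  global_section g -> sec_cover f m -> sec_cover (prod_hom f g) m.
Proof.
  intros Hg [m_pos [Ls [HLs cover]]]. split; [exact m_pos|].
  exists (fun i (p : prod_group H H') => Ls i (fst p)). split.
  - intros i Hi. destruct (HLs i Hi) as [sgL [[h Hh] secL]]. split; [|split].
    + exact (subgroup_preim (fst_hom H H') sgL).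
    + now exists (h, gone).
    + eapply local_section_mono;
        [|exact (local_section_prod secL (global_local_section (fun _ => True) Hg))].
      now split.
  - intros [h k]. apply cover.
Qed.

Lemma sec_le_cover (G H : group) (f : hom G H) m : sec_cover f m -> ele (sec f) (Some m).
Proof.
  intros Hm. unfold sec.
  destruct (excluded_middle_informative _) as [E|E]; [|exfalso; eauto].
  destruct (constructive_indefinite_description _ _) as [k [Hk Hmin]].
  simpl. auto.
Qed.

Lemma ele_sec_of_covers (G H G' H' : group) (f : hom G H) (g : hom G' H') :
  (forall m, sec_cover g m -> sec_cover f m) -> ele (sec f) (sec g).
Proof.
  intros Hfg. unfold sec at 2.
  destruct (excluded_middle_informative _) as [E|E]; [|now destruct (sec f)].
  destruct (constructive_indefinite_description _ _) as [k [Hk Hmin]].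
  simpl. apply sec_le_cover. auto.
Qed.

Lemma ele_antisym a b : ele a b -> ele b a -> a = b.
Proof. destruct a, b; simpl; intros; try contradiction; auto. f_equal; lia. Qed.

Lemma sec_le_prod_l (G1 H1 G2 H2 : group) (f1 : hom G1 H1) (f2 : hom G2 H2) :
  ~ global_section f1 -> ele (sec f1) (sec (prod_hom f1 f2)).
Proof.
  intros Hng. apply ele_sec_of_covers. intros m.
  apply (sec_cover_retract (pairg1_hom H1 H2) (fst_hom G1 G2) fst); auto.
Qed.

Lemma sec_le_prod_r (G1 H1 G2 H2 : group) (f1 : hom G1 H1) (f2 : hom G2 H2) :
  ~ global_section f2 -> ele (sec f2) (sec (prod_hom f1 f2)).
Proof.
  intros Hng. apply ele_sec_of_covers. intros m.
  apply (sec_cover_retract (pair1g_hom H1 H2) (snd_hom G1 G2) snd); auto.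
Qed.

Lemma sec_prod_global_le (G H G' H' : group) (f : hom G H) (g : hom G' H') :
  global_section g -> ele (sec (prod_hom f g)) (sec f).
Proof.
  intros Hg. apply ele_sec_of_covers. intros m. now apply sec_cover_prod_global.
Qed.

Theorem theorem3p4 :
  (forall (G1 H1 G2 H2 : group) (f1 : hom G1 H1) (f2 : hom G2 H2),
     (~ global_section f1 -> ele (sec f1) (sec (prod_hom f1 f2))) /\
     (~ global_section f2 -> ele (sec f2) (sec (prod_hom f1 f2)))) /\
  (forall (G H K : group) (f : hom G H),
     ele (sec (prod_hom f (id_hom K))) (sec f) /\
     (~ global_section f -> sec (prod_hom f (id_hom K)) = sec f)).
Proof.
  split.
  - intros G1 H1 G2 H2 f1 f2.
    split; [apply sec_le_prod_l | apply sec_le_prod_r].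
  - intros G H K f.
    pose proof (sec_prod_global_le f (id_global_section K)) as sec_prod_le.
    split; [exact sec_prod_le|].
    intros Hng. apply ele_antisym; [exact sec_prod_le|]. now apply sec_le_prod_l.
Qed.
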